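(* Let $G_1$ be an $r_1$-regular graph with $r_1\ge 1$ on $n_1$ vertices and $m_1$ edges, and let $G_2$ be an $r_2$-regular graph with $r_2\ge1$ on $n_2$ vertices. Let $0=\mu_1,\mu_2,\ldots,\mu_{n_1}$ be the normalized Laplacian eigenvalues of $G_1$ and $0=\nu_1,\nu_2,\ldots,\nu_{n_2}$ those of $G_2$ (listed with multiplicity). Then the normalized Laplacian spectrum (as a multiset) of the subdivision-vertex join $G_1\dot{\vee}G_2$ consists of: (i) $0$; (ii) $1$, with multiplicity $m_1-n_1$; (iii) $\dfrac{n_1+r_2\nu_i}{r_2+n_1}$ for $i=2,\ldots,n_2$; (iv) for each $i=2,\ldots,n_1$, the two roots of $(x-1)^2-\dfrac{r_1(2-\mu_i)}{2(r_1+n_2)}=0$; (v) the two roots of $x^2-\left(2+\dfrac{n_1}{r_2+n_1}\right)x+\dfrac{2n_1}{r_2+n_1}+\dfrac{n_2r_2}{(r_1+n_2)(r_2+n_1)}=0$. (If $m_1<n_1$, which can only happen when $r_1=1$, item (ii) means that $n_1-m_1$ copies of $1$ are removed from the multiset formed by items (i), (iii), (iv), (v).) Equivalently, the characteristic polynomial of $\mathcal{L}(G_1\dot{\vee}G_2)$ equals $$x(x-1)^{m_1-n_1}\left(x^2-\left(2+\tfrac{n_1}{r_2+n_1}\right)x+\tfrac{2n_1}{r_2+n_1}+\tfrac{n_2r_2}{(r_1+n_2)(r_2+n_1)}\right)\prod_{i=2}^{n_1}\left((x-1)^2-\tfrac{r_1(2-\mu_i)}{2(r_1+n_2)}\right)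\prod_{i=2}^{n_2}\left(x-\tfrac{n_1+r_2\nu_i}{r_2+n_1}\right).$$
   Context: All graphs are finite and simple. For a graph $G$ without isolated vertices, with adjacency matrix $A(G)$ and diagonal degree matrix $D(G)$, the normalized Laplacian matrix is $\mathcal{L}(G)=I-D(G)^{-1/2}A(G)D(G)^{-1/2}$; its eigenvalues (with multiplicity) form the normalized Laplacian spectrum of $G$. The subdivision graph $S(G)$ of $G$ is obtained by inserting a new vertex into every edge of $G$; the set of these new vertices is denoted $I(G)$. The subdivision-vertex join $G_1\dot{\vee}G_2$ of graphs $G_1,G_2$ is the graph obtained from $S(G_1)$ and (a disjoint copy of) $G_2$ by joining each vertex of $V(G_1)$ with every vertex of $V(G_2)$. *)

From HB Require Import structures.
From mathcomp Require Import all_boot all_order all_algebra.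
Set Implicit Arguments. Unset Strict Implicit. Unset Printing Implicit Defensive.
Import Order.TTheory GRing.Theory Num.Theory.
Local Open Scope ring_scope.

Definition simple_graph (V : finType) (e : rel V) : Prop :=
  symmetric e /\ irreflexive e.

Definition deg (V : finType) (e : rel V) (v : V) : nat := #|[set w | e v w]|.

Definition regular (V : finType) (e : rel V) (r : nat) : Prop :=
  forall v : V, deg e v = r.

Definition is_edge (V : finType) (e : rel V) (s : {set V}) : bool :=
  [exists x, exists y, e x y && (s == [set x; y])].

Definition edgeT (V : finType) (e : rel V) : finType :=
  {s : {set V} | is_edge e s}.

Definition nedges (V : finType) (e : rel V) : nat := #|{: edgeT e}|.

(* subdivision-vertex join: vertices (V(G1) + I(G1)) + V(G2) *)
Definition sv_join_rel (V1 V2 : finType) (e1 : rel V1) (e2 : rel V2)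
  : rel ((V1 + edgeT e1) + V2) :=
  fun x y =>
    match x, y with
    | inl (inl u), inl (inr f) => u \in val f
    | inl (inr f), inl (inl u) => u \in val f
    | inl (inl _), inr _ => true
    | inr _, inl (inl _) => true
    | inr w, inr w' => e2 w w'
    | _, _ => false
    end.

Arguments sv_join_rel {V1 V2} e1 e2 _ _.

Definition adjmx (R : rcfType) (V : finType) (e : rel V) : 'M[R]_#|V| :=
  \matrix_(i, j) (e (enum_val i) (enum_val j))%:R.

Definition degmx_invsqrt (R : rcfType) (V : finType) (e : rel V) : 'M[R]_#|V| :=
  diag_mx (\row_i (Num.sqrt ((deg e (enum_val i))%:R : R))^-1).

Definition nlap (R : rcfType) (V : finType) (e : rel V) : 'M[R]_#|V| :=
  1%:M - degmx_invsqrt R e *m adjmx R e *m degmx_invsqrt R e.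

From HB Require Import structures.
From mathcomp Require Import all_boot all_order all_algebra.
From mathcomp Require Import fingroup perm ring lra.
Import Order.TTheory GRing.Theory Num.Theory.
Set Implicit Arguments. Unset Strict Implicit. Unset Printing Implicit Defensive.

(* Order the vertices of the join as I(G1), V(G1), V(G2).  Then x I - L has the
   scalar block (x - 1) I on I(G1); taking its Schur complement costs a factor
   (x - 1)^m1 and, since B^T B = A1 + r1 I for the incidence matrix B, leaves a
   2 x 2 block matrix [P, b J; b J, S] with P affine in L(G1), S affine in
   L(G2) and J the all-ones matrix.  P and S have constant row sums p and s,
   so a column operation and a rank-one update give its determinant as
   det P * det S * (1 - b^2 n1 n2 / (p s)), and det (a I + b L) is the product
   of a + b mu over the spectrum of L.  The trivial eigenvalues mu_1 = nu_1 = 0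
   combine into the quadratic factor (v).  The identity so obtained at every
   x > 2 is then an identity of polynomials. *)

Section SimpleGraph.
Variables (V : finType) (e : rel V).

Lemma deg_sum u : deg e u = \sum_w (e u w : nat).
Proof.
by rewrite /deg -sum1dep_card big_mkcond /=; apply: eq_bigr => w _; case: (e u w).
Qed.

Hypothesis He : simple_graph e.

Lemma edgeP (f : edgeT e) : exists x y, [/\ e x y, x != y & val f = [set x; y]].
Proof.
have /existsP [x /existsP [y /andP [exy /eqP fE]]] := valP f.
exists x, y; split => //; apply: contraTneq exy => <-.
by case: He => _ ->.
Qed.

Lemma card_edge (f : edgeT e) : #|val f| = 2.
Proof. by have [x [y [_ xy ->]]] := edgeP f; rewrite cards2 xy. Qed.

Lemma sum_edges_mem2 u v : u != v ->
  \sum_(f : edgeT e) ((u \in val f) && (v \in val f) : nat) = e u v.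
Proof.
move=> uv; have [esym _] := He.
have memE (f : edgeT e) : (u \in val f) && (v \in val f) = ([set u; v] == val f).
  by rewrite eqEcard card_edge cards2 uv subUset !sub1set andbT.
under eq_bigr do rewrite memE.
case euv: (e u v).
  have uv_edge : is_edge e [set u; v].
    by apply/existsP; exists u; apply/existsP; exists v; rewrite euv eqxx.
  rewrite (bigD1 (exist _ [set u; v] uv_edge : edgeT e)) //= eqxx big1 // => f.
  move=> ff0; case: eqP => // fE; case/eqP: ff0.
  by apply: val_inj => /=; rewrite -fE.
apply: big1 => f _; case: eqP => // fE.
have [x [y [exy _ xyE]]] := edgeP f.
have ux : u \in [set x; y] by rewrite -xyE -fE set21.
have vx : v \in [set x; y] by rewrite -xyE -fE set22.
move: ux vx euv uv; rewrite !in_set2.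
case/orP => /eqP -> /orP [] /eqP ->; rewrite ?eqxx ?exy //.
by rewrite esym exy.
Qed.

Lemma sum_edges_mem u : \sum_(f : edgeT e) (u \in val f : nat) = deg e u.
Proof.
have [_ eirr] := He.
have other (f : edgeT e) : u \in val f -> \sum_w ((w \in val f) && (w != u) : nat) = 1.
  move=> uf; transitivity #|val f :\ u|.
    rewrite -sum1_card [RHS]big_mkcond /=.
    by apply: eq_bigr => w _; rewrite in_setD1 andbC.
  by have := cardsD1 u (val f); rewrite uf card_edge; case.
transitivity (\sum_(f : edgeT e) \sum_w ((u \in val f) && ((w \in val f) && (w != u)) : nat)).
  apply: eq_bigr => f _; case uf: (u \in val f); last by rewrite big1.
  by rewrite (other f uf).
rewrite exchange_big deg_sum; apply: eq_bigr => w _.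
have [->|wu] := eqVneq w u.
  by rewrite eirr; apply: big1 => f _; rewrite !andbF.
have uw : u != w by rewrite eq_sym.
by rewrite -(sum_edges_mem2 uw); apply: eq_bigr => f _; rewrite andbT.
Qed.

Lemma sum_edges_mem_mem u v :
  \sum_(f : edgeT e) ((u \in val f) && (v \in val f) : nat) = e u v + (u == v) * deg e u.
Proof.
have [<-|uv] := eqVneq u v; last by rewrite sum_edges_mem2 // addn0.
have [_ ->] := He; rewrite mul1n -sum_edges_mem.
by apply: eq_bigr => f _; rewrite andbb.
Qed.

End SimpleGraph.

Section JoinDegrees.
Variables (V1 V2 : finType) (e1 : rel V1) (e2 : rel V2).
Hypothesis sg1 : simple_graph e1.
Local Notation ej := (sv_join_rel e1 e2).

Lemma deg_join_V1 u : deg ej (inl (inl u)) = deg e1 u + #|V2|.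
Proof. by rewrite deg_sum !big_sumType /= big1_eq (sum_edges_mem sg1) sum1_card. Qed.

Lemma deg_join_E f : deg ej (inl (inr f)) = 2.
Proof.
rewrite deg_sum !big_sumType /= !big1_eq !addn0 -(card_edge sg1 f) -sum1_card.
by rewrite [RHS]big_mkcond /=; apply: eq_bigr => u _; case: (_ \in _).
Qed.

Lemma deg_join_V2 w : deg ej (inr w) = #|V1| + deg e2 w.
Proof. by rewrite deg_sum !big_sumType /= big1_eq sum1_card addn0 -deg_sum. Qed.

End JoinDegrees.

Local Open Scope ring_scope.

Section BlockDeterminants.
Variable F : fieldType.

Lemma det_block_scalar_ul m n (y : F) (B : 'M[F]_(m, n)) (C : 'M[F]_(n, m))
    (D : 'M[F]_n) :
  y != 0 -> \det (block_mx y%:M B C D) = y ^+ m * \det (D - y^-1 *: (C *m B)).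
Proof.
move=> y0.
have elim_C : block_mx 1%:M 0 (- (y^-1 *: C)) 1%:M *m block_mx y%:M B C D
    = block_mx y%:M B 0 (D - y^-1 *: (C *m B)).
  rewrite mulmx_block !mul1mx !mul0mx !addr0 !mulNmx -!scalemxAl mul_mx_scalar.
  by rewrite scalerA mulVf // scale1r addNr addrC.
have := congr1 determinant elim_C.
by rewrite det_mulmx det_lblock !det1 !mul1r det_ublock det_scalar => ->.
Qed.

Lemma det_block_scalar_dr m n (y : F) (A : 'M[F]_m) (B : 'M[F]_(m, n))
    (C : 'M[F]_(n, m)) :
  y != 0 -> \det (block_mx A B C y%:M) = y ^+ n * \det (A - y^-1 *: (B *m C)).
Proof.
move=> y0.
have elim_B : block_mx A B C y%:M *m block_mx 1%:M 0 (- (y^-1 *: C)) 1%:M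
    = block_mx (A - y^-1 *: (B *m C)) B 0 y%:M.
  rewrite mulmx_block !mulmx1 !mulmx0 ?addr0 ?add0r !mulmxN -!scalemxAr.
  by rewrite mul_scalar_mx scalerA mulVf // scale1r subrr.
have := congr1 determinant elim_B.
by rewrite det_mulmx det_lblock !det1 !mulr1 det_ublock det_scalar mulrC => ->.
Qed.

Lemma det_1_add_mulmxC m n (B : 'M[F]_(m, n)) (C : 'M[F]_(n, m)) :
  \det (1%:M + B *m C) = \det (1%:M + C *m B).
Proof.
have := det_block_scalar_ul (- B) C 1%:M (oner_neq0 F).
rewrite det_block_scalar_dr ?oner_neq0 // invr1 !scale1r !expr1n !mul1r.
by rewrite mulmxN mulNmx !opprK.
Qed.

Lemma det_1_add_const n (d : F) :
  \det (1%:M + d *: const_mx 1 : 'M[F]_n) = 1 + d * n%:R.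
Proof.
have -> : (d *: const_mx 1 : 'M[F]_n) = (d *: const_mx 1 : 'M_(n, 1)) *m const_mx 1.
  by apply/matrixP => i j; rewrite !mxE big_ord1 !mxE !mulr1.
rewrite det_1_add_mulmxC det_mx11 !mxE (eq_bigr (fun=> d)) => [|k _].
  by rewrite sumr_const card_ord mulr_natr.
by rewrite !mxE mul1r mulr1.
Qed.

Lemma mulmx_const_rowsum m n p (A : 'M[F]_(m, n)) (s c : F) :
  (forall i, \sum_j A i j = s) -> A *m (const_mx c : 'M_(n, p)) = const_mx (s * c).
Proof.
move=> rsA; apply/matrixP => i j; rewrite !mxE -(rsA i) mulr_suml.
by apply: eq_bigr => k _; rewrite mxE.
Qed.

Lemma rowsum_scalar_addZ n (A : 'M[F]_n) (a b s : F) :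
  (forall i, \sum_j A i j = s) -> forall i, \sum_j (a%:M + b *: A) i j = a + b * s.
Proof.
move=> rsA i; rewrite -(rsA i) mulr_sumr.
under eq_bigr do rewrite !mxE.
rewrite big_split /= (bigD1 i) //= eqxx mulr1n big1 ?addr0 // => j ji.
by rewrite eq_sym (negbTE ji) mulr0n.
Qed.

Lemma det_block_const_rowsum n1 n2 (P : 'M[F]_n1) (S : 'M[F]_n2) (b p s : F) :
  p != 0 -> s != 0 ->
  (forall i, \sum_j P i j = p) -> (forall i, \sum_j S i j = s) ->
  \det (block_mx P (const_mx b) (const_mx b) S)
    = \det P * \det S * (1 - b ^+ 2 * n1%:R * n2%:R / (p * s)).
Proof.
move=> p0 s0 rsP rsS.
set g := b ^+ 2 * n1%:R / p.
have rs_const i : \sum_j (const_mx b : 'M_(n2, n1)) i j = b * n1%:R.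
  by rewrite (eq_bigr (fun=> b)) => [|j _]; rewrite ?mxE // sumr_const card_ord mulr_natr.
have col_op : block_mx P (const_mx b) (const_mx b) S
      *m block_mx 1%:M (const_mx (- b / p)) 0 1%:M
    = block_mx P 0 (const_mx b) (S - g *: const_mx 1).
  rewrite mulmx_block !mulmx1 !mulmx0 !addr0 (mulmx_const_rowsum _ _ rsP).
  rewrite (mulmx_const_rowsum _ _ rs_const).
  by congr block_mx; apply/matrixP => i j; rewrite !mxE /g; field.
have rank_one : S - g *: const_mx 1 = S *m (1%:M + (- (g / s)) *: const_mx 1).
  rewrite mulmxDr mulmx1 -scalemxAr (mulmx_const_rowsum _ _ rsS).
  by congr (_ + _); apply/matrixP => i j; rewrite !mxE; field.
have := congr1 determinant col_op.
rewrite det_mulmx det_ublock !det1 !mulr1 det_lblock => ->.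
rewrite rank_one det_mulmx det_1_add_const /g; field.
by rewrite p0 s0.
Qed.

End BlockDeterminants.

Lemma det_mxsub_bij (R : comNzRingType) n k (A : 'M[R]_n) (h : 'I_k -> 'I_n) :
  bijective h -> \det (mxsub h h A) = \det A.
Proof.
move=> h_bij.
have ekn : k = n by rewrite -(card_ord k) -(card_ord n) (bij_eq_card h_bij).
subst k; pose s := perm (bij_inj h_bij).
have -> : mxsub h h A = row_perm s (col_perm s A).
  by apply/matrixP => i j; rewrite !mxE !permE.
rewrite row_permE col_permE !det_mulmx !det_perm odd_permV mulrCA.
by rewrite -signr_addb addbb expr0 mulr1.
Qed.

Lemma horner_char_poly (R : comNzRingType) n (A : 'M[R]_n) (x : R) :
  (char_poly A).[x] = \det (x%:M - A).
Proof.
rewrite /char_poly -horner_evalE -det_map_mx; congr (\det _).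
apply/matrixP => i j; rewrite !mxE /= horner_evalE.
by rewrite hornerD hornerN hornerC hornerMn hornerX.
Qed.

Lemma size_char_poly_roots (R : idomainType) n (A : 'M[R]_n) (mu : seq R) :
  char_poly A = \prod_(m <- mu) ('X - m%:P) -> size mu = n.
Proof.
by move=> cA; apply/succn_inj; rewrite -(size_char_poly A) cA size_prod_XsubC.
Qed.

Lemma det_affine_of_char_poly (R : fieldType) n (A : 'M[R]_n) (mu : seq R) (a b : R) :
  b != 0 -> char_poly A = \prod_(m <- mu) ('X - m%:P) ->
  \det (a%:M + b *: A) = \prod_(m <- mu) (a + b * m).
Proof.
move=> b0 cA.
have size_mu := size_char_poly_roots cA.
have -> : a%:M + b *: A = (- b) *: ((- (a / b))%:M - A).
  apply/matrixP => i j; rewrite !mxE.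
  by case: eqP => _; rewrite ?mulr1n ?mulr0n; field.
rewrite detZ -horner_char_poly cA horner_prod -size_mu {size_mu cA}.
elim: mu => [|m s IH]; first by rewrite !big_nil expr0 mulr1.
by rewrite !big_cons /= exprS -IH hornerXsubC; field.
Qed.

Lemma poly_eq_on_ge (R : numDomainType) (c : R) (p q : {poly R}) :
  (forall x, c <= x -> p.[x] = q.[x]) -> p = q.
Proof.
move=> pq; apply/eqP; rewrite -subr_eq0; apply/eqP.
apply: (@roots_geq_poly_eq0 _ _ [seq c + i%:R | i <- iota 0 (size (p - q))]).
- apply/allP => _ /mapP [i _ ->].
  by rewrite /root hornerD hornerN pq ?subrr // lerDl ler0n.
- by rewrite map_inj_uniq ?iota_uniq // => i j /addrI /eqP; rewrite eqr_nat => /eqP.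
- by rewrite size_map size_iota.
Qed.

Lemma prod_seq_mulr_const (R : comNzRingType) (I : Type) (s : seq I) (f : I -> R) y :
  \prod_(i <- s) (f i * y) = \prod_(i <- s) f i * y ^+ size s.
Proof.
elim: s => [|i s IH]; first by rewrite !big_nil mulr1.
by rewrite !big_cons IH exprS; ring.
Qed.

Section NormalizedLaplacian.
Variables (R : rcfType) (V : finType) (e : rel V).

Lemma mul_inv_sqrt_nat (n : nat) :
  (Num.sqrt (n%:R : R))^-1 * (Num.sqrt n%:R)^-1 = n%:R^-1.
Proof. by rewrite -invfM -expr2 sqr_sqrtr // ler0n. Qed.

Lemma nlapE i j :
  nlap R e i j = (i == j)%:R - (e (enum_val i) (enum_val j))%:R
    * ((Num.sqrt (deg e (enum_val i))%:R)^-1 * (Num.sqrt (deg e (enum_val j))%:R)^-1).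
Proof.
rewrite /nlap /degmx_invsqrt mul_diag_mx mul_mx_diag !mxE.
by rewrite mulrA [_ * (_%:R)]mulrC -mulrA [X in _ - X]mulrCA.
Qed.

Lemma char_mx_nlap_rank (x : R) u v :
  (x%:M - nlap R e) (enum_rank u) (enum_rank v)
    = (x - 1) *+ (u == v)
      + (e u v)%:R * ((Num.sqrt (deg e u)%:R)^-1 * (Num.sqrt (deg e v)%:R)^-1).
Proof.
rewrite 3!mxE nlapE !enum_rankK (inj_eq enum_rank_inj).
by case: (u == v); rewrite ?mulr1n ?mulr0n; ring.
Qed.

Definition incmx : 'M[R]_(#|edgeT e|, #|V|) :=
  \matrix_(f < #|edgeT e|, u < #|V|) (enum_val u \in val (enum_val f : edgeT e))%:R.

Variable r : nat.
Hypothesis reg : regular e r.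

Lemma nlap_regular : nlap R e = 1%:M - r%:R^-1 *: adjmx R e.
Proof.
apply/matrixP => i j; rewrite nlapE !reg mul_inv_sqrt_nat !mxE mulrC.
by case: (i == j).
Qed.

Lemma adjmx_rowsum i : \sum_j adjmx R e i j = r%:R.
Proof.
under eq_bigr do rewrite mxE.
rewrite -(big_enum_val (fun v => (e (enum_val i) v)%:R)) /= -natr_sum.
by rewrite -deg_sum reg.
Qed.

Lemma nlap_rowsum : (0 < r)%N -> forall i, \sum_j nlap R e i j = 0.
Proof.
move=> r_gt0 i; rewrite nlap_regular -scaleNr.
rewrite (rowsum_scalar_addZ _ _ adjmx_rowsum) mulNr.
by rewrite mulVf ?subrr // pnatr_eq0 -lt0n.
Qed.

Hypothesis He : simple_graph e.

Lemma incmx_gram : (incmx)^T *m incmx = adjmx R e + r%:R%:M.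
Proof.
apply/matrixP => u v; rewrite !mxE.
under eq_bigr do rewrite !mxE -natrM mulnb.
rewrite -natr_sum -(big_enum_val (fun f : edgeT e =>
  ((enum_val u \in val f) && (enum_val v \in val f) : nat))) /=.
by rewrite sum_edges_mem_mem // reg (inj_eq enum_val_inj) natrD natrM mulr_natl.
Qed.

End NormalizedLaplacian.

Section JoinOrdering.
Variables A B C : finType.

Definition join_vertex (i : 'I_(#|B| + (#|A| + #|C|))) : (A + B) + C :=
  match split i with
  | inl f => inl (inr (enum_val f))
  | inr j => match split j with
             | inl u => inl (inl (enum_val u))
             | inr w => inr (enum_val w)
             end
  end.

Lemma join_vertex_E f : join_vertex (lshift _ f) = inl (inr (enum_val f)).
Proof. by rewrite /join_vertex (unsplitK (inl f)). Qed.

Lemma join_vertex_V1 u : join_vertex (rshift _ (lshift _ u)) = inl (inl (enum_val u)).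
Proof. by rewrite /join_vertex (unsplitK (inr _)) (unsplitK (inl u)). Qed.

Lemma join_vertex_V2 w : join_vertex (rshift _ (rshift _ w)) = inr (enum_val w).
Proof. by rewrite /join_vertex (unsplitK (inr _)) (unsplitK (inr w)). Qed.

Lemma join_vertex_bij : bijective join_vertex.
Proof.
pose g (v : (A + B) + C) : 'I_(#|B| + (#|A| + #|C|)) :=
  match v with
  | inl (inr f) => lshift _ (enum_rank f)
  | inl (inl u) => rshift _ (lshift _ (enum_rank u))
  | inr w => rshift _ (rshift _ (enum_rank w))
  end.
exists g.
- move=> i; rewrite -[i]splitK; case: (split i) => [f|j] /=.
    by rewrite join_vertex_E /g enum_valK.
  rewrite -[j]splitK; case: (split j) => [u|w] /=.
    by rewrite join_vertex_V1 /g enum_valK.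
  by rewrite join_vertex_V2 /g enum_valK.
- by case=> [[u|f]|w]; rewrite /g ?join_vertex_E ?join_vertex_V1 ?join_vertex_V2 enum_rankK.
Qed.

End JoinOrdering.

Section JoinSpectrum.
Variables (R : rcfType) (V1 V2 : finType) (e1 : rel V1) (e2 : rel V2) (r1 r2 : nat).
Hypothesis sg1 : simple_graph e1.
Hypotheses (r1_gt0 : (0 < r1)%N) (r2_gt0 : (0 < r2)%N).
Hypotheses (reg1 : regular e1 r1) (reg2 : regular e2 r2).

Local Notation ej := (sv_join_rel e1 e2).
Local Notation E := (edgeT e1).
Local Notation N1 := (r1 + #|V2|)%N.
Local Notation N2 := (#|V1| + r2)%N.

Let r1_neq0 : r1%:R != 0 :> R.
Proof. by rewrite pnatr_eq0 -lt0n. Qed.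
Let r2_neq0 : r2%:R != 0 :> R.
Proof. by rewrite pnatr_eq0 -lt0n. Qed.
Let N1_neq0 : r1%:R + #|V2|%:R != 0 :> R.
Proof. by rewrite -natrD pnatr_eq0 addn_eq0 negb_and -lt0n r1_gt0. Qed.
Let N2_neq0 : #|V1|%:R + r2%:R != 0 :> R.
Proof. by rewrite -natrD pnatr_eq0 addn_eq0 negb_and -!lt0n r2_gt0 orbT. Qed.

Let join_index i := enum_rank (@join_vertex V1 E V2 i).
Let a : R := (Num.sqrt N1%:R)^-1 * (Num.sqrt 2%:R)^-1.
Let b : R := (Num.sqrt N1%:R)^-1 * (Num.sqrt N2%:R)^-1.

Lemma char_mx_join_block (x : R) :
  mxsub join_index join_index (x%:M - nlap R ej) =
  block_mx (x - 1)%:M (row_mx (a *: incmx R e1) 0) (col_mx (a *: (incmx R e1)^T) 0)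
    (block_mx (x - 1)%:M (const_mx b) (const_mx b)
       ((x - 1)%:M + N2%:R^-1 *: adjmx R e2)).
Proof.
have deg1 u : deg ej (inl (inl u)) = N1 by rewrite deg_join_V1 // reg1.
have deg2 w : deg ej (inr w) = N2 by rewrite deg_join_V2 reg2.
apply/matrixP => i j; rewrite mxE char_mx_nlap_rank -[i]splitK -[j]splitK.
case: (split i) => [f|i']; case: (split j) => [f'|j'] /=;
  rewrite ?(block_mxEul, block_mxEur, block_mxEdl, block_mxEdr);
  try (rewrite -[i']splitK; case: (split i') => [u|w] /=);
  try (rewrite -[j']splitK; case: (split j') => [u'|w'] /=);
  rewrite ?(block_mxEul, block_mxEur, block_mxEdl, block_mxEdr);
  rewrite ?(row_mxEl, row_mxEr, col_mxEu, col_mxEd);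
  rewrite ?join_vertex_E ?join_vertex_V1 ?join_vertex_V2;
  rewrite ?deg1 ?deg2 ?(deg_join_E e2 sg1) !mxE /=.
all: rewrite ?(inj_eq inl_inj) ?(inj_eq inr_inj) ?(inj_eq enum_val_inj) /=.
all: rewrite ?mul0r ?addr0 ?mulr0n ?add0r ?mulr1 ?mul1r ?mul_inv_sqrt_nat //.
all: rewrite /a /b; ring.
Qed.

Definition mu_factor (m : R) : {poly R} :=
  ('X - 1) ^+ 2 - (r1%:R * (2 - m) / (2 * (r1%:R + #|V2|%:R)))%:P.

Definition nu_factor (v : R) : {poly R} :=
  'X - ((#|V1|%:R + r2%:R * v) / (r2%:R + #|V1|%:R))%:P.

Definition coupled_factor : {poly R} :=
  'X ^+ 2 - (2 + #|V1|%:R / (r2%:R + #|V1|%:R))%:P * 'X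
  + (2 * #|V1|%:R / (r2%:R + #|V1|%:R)
     + #|V2|%:R * r2%:R / ((r1%:R + #|V2|%:R) * (r2%:R + #|V1|%:R)))%:P.

Section AtPoint.
Variable x : R.
(* Any x > 2 keeps the pivots [y], [alpha1] and [alpha2] away from zero. *)
Hypothesis x_gt2 : 2 < x.

Let y := x - 1.
Let beta1 : R := r1%:R / (2 * N1%:R * y).
Let alpha1 : R := y - 2 * beta1.
Let alpha2 : R := y + r2%:R / N2%:R.
Let beta2 : R := - (r2%:R / N2%:R).

Let x_neq0 : x != 0.
Proof. by apply: lt0r_neq0; move: x_gt2; lra. Qed.

Let y_gt1 : 1 < y.
Proof. by rewrite /y; move: x_gt2; lra. Qed.

Let y_neq0 : y != 0.
Proof. by apply: lt0r_neq0; apply: lt_trans y_gt1. Qed.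

Let alpha1_neq0 : alpha1 != 0.
Proof.
have r1_le_N1 : r1%:R / N1%:R <= 1 :> R.
  by rewrite ler_pdivrMr ?ltr0n ?addn_gt0 ?r1_gt0 // mul1r ler_nat leq_addr.
have alE : alpha1 * y = y * y - r1%:R / N1%:R.
  by rewrite /alpha1 /beta1 natrD; field; rewrite y_neq0 N1_neq0.
have : 0 < alpha1 * y by rewrite alE; move: y_gt1; nra.
by apply: contraTneq => ->; rewrite mul0r ltxx.
Qed.

Let alpha2_neq0 : alpha2 != 0.
Proof.
have : 0 <= r2%:R / N2%:R :> R by rewrite divr_ge0 ?ler0n.
by rewrite /alpha2 => ?; apply: lt0r_neq0; move: y_gt1; lra.
Qed.

Let beta1_neq0 : beta1 != 0.
Proof. by rewrite /beta1 mulf_neq0 // invr_eq0 !mulf_neq0 ?natrD // pnatr_eq0. Qed.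

Let beta2_neq0 : beta2 != 0.
Proof. by rewrite /beta2 oppr_eq0 mulf_neq0 ?invr_eq0 ?natrD. Qed.

Lemma det_char_mx_join :
  \det (x%:M - nlap R ej) = y ^+ #|E|
    * \det (block_mx (alpha1%:M + beta1 *: nlap R e1) (const_mx b) (const_mx b)
                     (alpha2%:M + beta2 *: nlap R e2)).
Proof.
have aa : a * a = (2 * N1%:R)^-1.
  by rewrite /a mulrACA !mul_inv_sqrt_nat invfM mulrC.
have join_index_bij : bijective join_index.
  exact: (bij_comp (@enum_rank_bij _) (@join_vertex_bij V1 E V2)).
rewrite -(det_mxsub_bij _ join_index_bij) char_mx_join_block det_block_scalar_ul //.
congr (_ * \det _).
rewrite mul_col_row !mulmx0 !mul0mx -scalemxAl -scalemxAr scalerA.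
rewrite (incmx_gram R reg1 sg1).
rewrite scale_block_mx opp_block_mx add_block_mx !scaler0 !oppr0 !addr0.
rewrite (nlap_regular R reg1) (nlap_regular R reg2).
congr block_mx; apply/matrixP => i j; rewrite !mxE ?aa /alpha1 /beta1 /alpha2 /beta2.
  by case: (i == j); rewrite ?mulr1n ?mulr0n /y; field;
    rewrite -/y y_neq0 r1_neq0 N1_neq0.
by case: (i == j); rewrite ?mulr1n ?mulr0n /y; field; rewrite r2_neq0 N2_neq0.
Qed.

Lemma horner_mu_factor m : (mu_factor m).[x] = (alpha1 + beta1 * m) * y.
Proof.
rewrite /mu_factor !hornerE /alpha1 /beta1 /y; field.
by rewrite -/y y_neq0 N1_neq0.
Qed.

Lemma horner_nu_factor v : (nu_factor v).[x] = alpha2 + beta2 * v.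
Proof.
rewrite /nu_factor !hornerE /alpha2 /beta2 /y; field.
by rewrite N2_neq0.
Qed.

Lemma horner_coupled_factor :
  coupled_factor.[x] = (alpha1 * alpha2 - b ^+ 2 * #|V1|%:R * #|V2|%:R) * y / x.
Proof.
have bb : b ^+ 2 = (N1%:R * N2%:R)^-1.
  by rewrite /b expr2 mulrACA !mul_inv_sqrt_nat invfM.
rewrite /coupled_factor !(hornerD, hornerN, hornerM, hornerX, hornerC, horner_exp) bb.
rewrite /alpha1 /alpha2 /beta1 /y; field.
by rewrite x_neq0 N1_neq0 N2_neq0 -/y y_neq0.
Qed.

Lemma horner_char_poly_join (mu nu : seq R) :
  char_poly (nlap R e1) = \prod_(m <- 0 :: mu) ('X - m%:P) ->
  char_poly (nlap R e2) = \prod_(v <- 0 :: nu) ('X - v%:P) ->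
  (char_poly (nlap R ej) * ('X - 1) ^+ #|V1|).[x]
    = ('X * ('X - 1) ^+ nedges e1 * coupled_factor
       * \prod_(m <- mu) mu_factor m * \prod_(v <- nu) nu_factor v).[x].
Proof.
move=> cp1 cp2.
have rs1 i : \sum_j (alpha1%:M + beta1 *: nlap R e1) i j = alpha1.
  by rewrite (rowsum_scalar_addZ _ _ (nlap_rowsum R reg1 r1_gt0)) mulr0 addr0.
have rs2 i : \sum_j (alpha2%:M + beta2 *: nlap R e2) i j = alpha2.
  by rewrite (rowsum_scalar_addZ _ _ (nlap_rowsum R reg2 r2_gt0)) mulr0 addr0.
rewrite hornerM horner_char_poly det_char_mx_join.
rewrite (det_block_const_rowsum _ alpha1_neq0 alpha2_neq0 rs1 rs2).
rewrite (det_affine_of_char_poly _ beta1_neq0 cp1) (det_affine_of_char_poly _ beta2_neq0 cp2).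
rewrite !big_cons !mulr0 !addr0 !(hornerM, horner_exp, hornerXsubC, hornerX) !horner_prod.
have -> : (x - 1) ^+ #|V1| = y * y ^+ size mu.
  by rewrite -(size_char_poly_roots cp1) exprS.
rewrite (eq_bigr _ (fun m _ => horner_mu_factor m)).
rewrite (eq_bigr _ (fun v _ => horner_nu_factor v)).
rewrite prod_seq_mulr_const horner_coupled_factor -/y /nedges.
(* Abstracting the products and powers keeps [field] tractable. *)
set P1 := \prod_(_ <- mu) _; set P2 := \prod_(_ <- nu) _.
set K := b ^+ 2 * _ * _; set Ym := y ^+ size mu; set Y := y ^+ _.
clearbody P1 P2 K Ym Y; field.
by rewrite x_neq0 alpha1_neq0 alpha2_neq0.
Qed.

End AtPoint.

Lemma char_poly_join (mu nu : seq R) :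
  char_poly (nlap R e1) = \prod_(m <- 0 :: mu) ('X - m%:P) ->
  char_poly (nlap R e2) = \prod_(v <- 0 :: nu) ('X - v%:P) ->
  char_poly (nlap R ej) * ('X - 1) ^+ #|V1|
    = 'X * ('X - 1) ^+ nedges e1 * coupled_factor
      * \prod_(m <- mu) mu_factor m * \prod_(v <- nu) nu_factor v.
Proof.
move=> cp1 cp2; apply: (@poly_eq_on_ge _ 3) => x x_ge3.
by apply: horner_char_poly_join cp1 cp2; move: x_ge3; lra.
Qed.

End JoinSpectrum.

Theorem theorem2p3 (R : rcfType) (V1 V2 : finType) (e1 : rel V1) (e2 : rel V2)
  (r1 r2 : nat) (mu nu : seq R) :
  simple_graph e1 -> simple_graph e2 ->
  (0 < #|V1|)%N -> (0 < #|V2|)%N ->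
  (1 <= r1)%N -> (1 <= r2)%N ->
  regular e1 r1 -> regular e2 r2 ->
  size mu = #|V1| -> nth 0 mu 0 = 0 ->
  char_poly (nlap R e1) = \prod_(m <- mu) ('X - m%:P) ->
  size nu = #|V2| -> nth 0 nu 0 = 0 ->
  char_poly (nlap R e2) = \prod_(m <- nu) ('X - m%:P) ->
  let n1 : R := (#|V1|)%:R in
  let n2 : R := (#|V2|)%:R in
  let m1 := nedges e1 in
  let s1 : R := r1%:R in
  let s2 : R := r2%:R in
  char_poly (nlap R (sv_join_rel e1 e2)) * ('X - 1) ^+ #|V1| =
    'X * ('X - 1) ^+ m1 *
    ('X ^+ 2 - (2 + n1 / (s2 + n1))%:P * 'X
       + (2 * n1 / (s2 + n1) + n2 * s2 / ((s1 + n2) * (s2 + n1)))%:P) *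
    \prod_(m <- behead mu) (('X - 1) ^+ 2 - (s1 * (2 - m) / (2 * (s1 + n2)))%:P) *
    \prod_(v <- behead nu) ('X - ((n1 + s2 * v) / (s2 + n1))%:P).
Proof.
(* Only the regularity of G2 enters, not its simplicity. *)
move=> sg1 _ V1_gt0 V2_gt0 r1_gt0 r2_gt0 reg1 reg2 size_mu mu0 cp1 size_nu nu0 cp2.
case: mu size_mu mu0 cp1 => [|m0 mu] size_mu /= mu0 cp1.
  by rewrite -size_mu in V1_gt0.
case: nu size_nu nu0 cp2 => [|v0 nu] size_nu /= nu0 cp2.
  by rewrite -size_nu in V2_gt0.
subst m0 v0; exact: char_poly_join.
Qed.
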